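(* Let $t>0$, $0<t_{sc}<t$, $t_{ave}>0$, $c>0$, $d\in(0,1)$, and let $\Gamma:[0,1]\to(0,\infty)$ satisfy $\Gamma(d)>c$. Let $\eta$, $\zeta$ and $\Delta\pi$ be the transmission efficiency, service integrity and cooperation margin defined in the context. Then $$\Delta\pi=1-\frac{d}{(1-\zeta)\,(1-c/\Gamma(d))},$$ $$\Delta\pi=1-\frac{1-(1-d)\exp\!\left(-\frac{t_{sc}}{t_{ave}}\frac{1}{1-\eta}\right)}{1-c/\Gamma(d)},$$ $$\zeta=1-\frac{d}{1-(1-d)\exp\!\left(-\frac{t_{sc}}{t_{ave}}\frac{1}{1-\eta}\right)}.$$
   Context: The transmission efficiency is $\eta=1-t_{sc}/t$. Service integrity: the service duration $T$ is exponentially distributed with mean $t_{ave}$, and the number of rounds is $M=\lceil T/t\rceil$. The service integrity is $$\zeta=\sum_{m=1}^\infty(1-d)^m\Pr(M=m).$$ Cooperation margin: - The continuation probability is $w=\exp(-t/t_{ave})$. - The trial time $\tau\in(0,t)$ and price $p$ satisfy $p=\Gamma(d)(1-\tau/t)+\frac{c}{1-d}\frac{\tau}{t}$. - The SP's long-term payoffs against a cooperating client are $$\Pi_s^{\mathrm{C}}=\frac{(1-d)(p-c)t-dc\tau}{1-(1-d)w}$$ when the SP cooperates, and $$\Pi_s^{\mathrm{D}}=(1-d)pt-c\tau$$ when the SP always defects. - The cooperation margin is $\Delta\pi=1-\Pi_s^{\mathrm D}/\Pi_s^{\mathrm C}$. *)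

From HB Require Import structures.
From mathcomp Require Import all_boot all_order all_algebra.
From mathcomp Require Import all_classical all_reals all_analysis.
Set Implicit Arguments. Unset Strict Implicit. Unset Printing Implicit Defensive.
Import Order.TTheory GRing.Theory Num.Theory.
Local Open Scope classical_set_scope.
Local Open Scope ring_scope.

Section defs.
Context {R : realType}.

Definition trans_eff (t t_sc : R) : R := 1 - t_sc / t.

(* Pr(M = m) where M = ceil(T / t) and T ~ Exponential with mean t_ave
   (rate 1/t_ave), using the library's exponential probability measure
   (an extended real). *)
Definition prM (t t_ave : R) (m : nat) : \bar R :=
  exponential_prob (t_ave^-1) [set x : R | Num.ceil (x / t) = (m%:Z)%R].

Definition service_integrity (t t_ave d : R) : R :=
  fine (\sum_(1 <= m <oo) (((1 - d) ^+ m)%:E * prM t t_ave m))%E.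

Definition cont_prob (t t_ave : R) : R := expR (- (t / t_ave)).

Definition Pi_C (t t_ave c d p tau : R) : R :=
  ((1 - d) * (p - c) * t - d * c * tau) / (1 - (1 - d) * cont_prob t t_ave).

Definition Pi_D (t c d p tau : R) : R := (1 - d) * p * t - c * tau.

Definition coop_margin (t t_ave c d p tau : R) : R :=
  1 - Pi_D t c d p tau / Pi_C t t_ave c d p tau.

End defs.

From HB Require Import structures.
From mathcomp Require Import all_boot all_order all_algebra.
From mathcomp Require Import all_classical all_reals all_analysis.
From mathcomp Require Import measurable_realfun ftc exponential_distribution.
From mathcomp Require Import ring lra.
Import numFieldTopology.Exports.
Import Order.TTheory GRing.Theory Num.Theory.
Local Open Scope classical_set_scope.
Local Open Scope ring_scope.

(* Write w := exp(-t/t_ave). Since M = ceil(T/t), the event {M = n+1} is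
   {T in ]n t, (n+1) t]}, of probability w^n - w^(n+1); hence zeta is a
   geometric series with sum (1-d)(1-w)/(1-(1-d)w), that is
   1 - zeta = d/(1-(1-d)w). At the given price both payoffs carry the factor
   (1-d)(t-tau): Pi_D = Gamma(d)(1-d)(t-tau) and
   Pi_C = (1-d)(t-tau)(Gamma(d)-c)/(1-(1-d)w), which gives the first two
   formulas. Finally t_sc/(1-eta) = t, so the exponential in the statement
   is w itself. *)

Lemma exponential_prob_itv_oc (R : realType) (r a b : R) :
  0 < r -> 0 <= a -> a < b ->
  exponential_prob r `]a, b] = (expR (- r * a) - expR (- r * b))%:E.
Proof.
move=> r0 a0 ab.
rewrite /exponential_prob integral_itv_obnd_cbnd; last first.
  apply/measurable_EFinP.
  exact: measurable_funS (measurable_exponential_pdf r).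
have expNM_cont : continuous (fun z : R^o => expR (- r * z)).
  move=> z; apply: continuous_comp; last exact: continuous_expR.
  by apply: continuousM => //; apply: (@continuousN _ R^o); exact: cst_continuous.
rewrite (@continuous_FTC2 _ _ (fun x => - expR (- r * x))) //.
- by rewrite -EFinB opprK addrC.
- apply: (@continuous_subspaceW R^o _ _ [set` `[0, +oo[%R]).
  + by move=> x /=; rewrite !in_itv/= andbT => /andP[/(le_trans a0)].
  + exact: within_continuous_exponential_pdf.
- split.
  + by move=> z _; exact: ex_derive.
  + by apply/cvg_at_right_filter; apply: cvgN; exact: expNM_cont.
  + by apply/cvg_at_left_filter; apply: cvgN; exact: expNM_cont.
- move=> z; rewrite in_itv/= => /andP[az _].
  by apply: derive1_exponential_pdf; rewrite in_itv/= andbT (le_lt_trans a0).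
Qed.

Lemma ceil_div_eqS_itv (R : realType) (t : R) (n : nat) : 0 < t ->
  [set x : R | Num.ceil (x / t) = n.+1%:Z] = `]n%:R * t, n.+1%:R * t]%classic.
Proof.
move=> t0; have nS : n.+1%:Z - 1 = n%:Z by rewrite -addn1 PoszD addrK.
apply/seteqP; split => x /=; rewrite in_itv /=.
- move/eqP; rewrite ceil_eq nS => /andP[nx xn].
  by rewrite -ltr_pdivlMr // -ler_pdivrMr // nx xn.
- move=> /andP[nx xn]; apply/eqP; rewrite ceil_eq nS.
  by rewrite ltr_pdivlMr // ler_pdivrMr // nx xn.
Qed.

Section continuation_probability.
Variables (R : realType) (t t_ave : R).
Hypotheses (t_gt0 : 0 < t) (t_ave_gt0 : 0 < t_ave).
Let w := cont_prob t t_ave.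

Lemma cont_prob_gt0 : 0 < w.
Proof. exact: expR_gt0. Qed.

Lemma cont_prob_lt1 : w < 1.
Proof. by rewrite /w /cont_prob expR_lt1 oppr_lt0 divr_gt0. Qed.

Lemma prM_succ (n : nat) : prM t t_ave n.+1 = (w ^+ n - w ^+ n.+1)%:E.
Proof.
rewrite /prM ceil_div_eqS_itv // exponential_prob_itv_oc //.
- by rewrite /w /cont_prob -!expRM_natl; congr (EFin (expR _ - expR _)); ring.
- by rewrite invr_gt0.
- by rewrite mulr_ge0 // ltW.
- by rewrite ltr_pM2r // ltr_nat.
Qed.

Variable d : R.
Hypotheses (d_gt0 : 0 < d) (d_lt1 : d < 1).

Lemma mul_cont_prob_lt1 : (1 - d) * w < 1.
Proof. by have := mulr_gt0 d_gt0 cont_prob_gt0; have := cont_prob_lt1; lra. Qed.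

Lemma service_integrity_partial_sum (n : nat) :
  (\sum_(1 <= m < n.+1) ((1 - d) ^+ m)%:E * prM t t_ave m)%E =
  (series (geometric ((1 - d) * (1 - w)) ((1 - d) * w)) n)%:E.
Proof.
rewrite -sumEFin /series big_add1 /=; apply: eq_bigr => k _.
rewrite prM_succ -EFinM /geometric /= !exprS exprMn.
by move: ((1 - d) ^+ k) (w ^+ k) => u v; congr EFin; ring.
Qed.

Lemma service_integrity_closed_form :
  service_integrity t t_ave d = (1 - d) * (1 - w) / (1 - (1 - d) * w).
Proof.
have ratio_lt1 : `|(1 - d) * w| < 1.
  by rewrite ger0_norm ?mul_cont_prob_lt1 // mulr_ge0 ?subr_ge0 ?ltW ?cont_prob_gt0.
rewrite /service_integrity -[RHS]/(fine (_ : R)%:E); congr fine.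
apply: cvg_lim => //.
rewrite -cvg_shiftS /=; under eq_fun do rewrite service_integrity_partial_sum.
exact: cvg_comp (cvg_geometric_series ratio_lt1) _.
Qed.

Lemma one_sub_service_integrity :
  1 - service_integrity t t_ave d = d / (1 - (1 - d) * w).
Proof.
have q_neq0 : 1 - (1 - d) * w != 0 by rewrite subr_eq0 gt_eqF ?mul_cont_prob_lt1.
by rewrite service_integrity_closed_form; field.
Qed.

End continuation_probability.

Lemma expR_trans_eff (R : realType) (t t_sc t_ave : R) : t_sc != 0 ->
  expR (- (t_sc / t_ave * (1 - trans_eff t t_sc)^-1)) = cont_prob t t_ave.
Proof.
move=> t_sc_neq0.
by rewrite /cont_prob /trans_eff subKr invf_div mulrC mulrA divfK.
Qed.

Section payoffs_at_price.
Variables (R : realType) (t t_ave c d tau G : R).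
Hypotheses (t_neq0 : t != 0) (d_neq1 : d != 1).
Let p := G * (1 - tau / t) + c / (1 - d) * (tau / t).
Let d'_neq0 : 1 - d != 0. Proof. by rewrite subr_eq0 eq_sym. Qed.

Lemma Pi_D_at_price : Pi_D t c d p tau = G * (1 - d) * (t - tau).
Proof. by rewrite /Pi_D /p; field; apply/andP. Qed.

Lemma Pi_C_at_price : Pi_C t t_ave c d p tau =
  (1 - d) * (t - tau) * (G - c) / (1 - (1 - d) * cont_prob t t_ave).
Proof. by rewrite /Pi_C /p; congr (_ / _); field; apply/andP. Qed.

Lemma coop_margin_at_price : G != 0 -> G != c -> tau != t ->
  coop_margin t t_ave c d p tau =
  1 - (1 - (1 - d) * cont_prob t t_ave) / (1 - c / G).
Proof.
move=> G_neq0 G_neq_c tau_neq_t.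
have t'_neq0 : t - tau != 0 by rewrite subr_eq0 eq_sym.
have G'_neq0 : G - c != 0 by rewrite subr_eq0.
rewrite /coop_margin Pi_D_at_price Pi_C_at_price invf_div; congr (_ - _).
by field; rewrite G_neq0 G'_neq0 t'_neq0 d'_neq0.
Qed.

End payoffs_at_price.

Theorem theorem4 (R : realType) (t t_sc t_ave c d : R) (Gamma : R -> R)
    (tau p : R)
    (ht : 0 < t) (htsc0 : 0 < t_sc) (htsc : t_sc < t) (htave : 0 < t_ave)
    (hc : 0 < c) (hd0 : 0 < d) (hd1 : d < 1)
    (hGamma : forall x : R, 0 <= x <= 1 -> 0 < Gamma x)
    (hGd : c < Gamma d)
    (htau0 : 0 < tau) (htau1 : tau < t)
    (hp : p = Gamma d * (1 - tau / t) + c / (1 - d) * (tau / t)) :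
  let eta := trans_eff t t_sc in
  let zeta := service_integrity t t_ave d in
  let dpi := coop_margin t t_ave c d p tau in
  [/\ dpi = 1 - d / ((1 - zeta) * (1 - c / Gamma d)),
      dpi = 1 - (1 - (1 - d) * expR (- (t_sc / t_ave * (1 - eta)^-1)))
                / (1 - c / Gamma d)
    & zeta = 1 - d / (1 - (1 - d) * expR (- (t_sc / t_ave * (1 - eta)^-1)))].
Proof.
move=> eta zeta dpi.
have Gd_gt0 : 0 < Gamma d := lt_trans hc hGd.
rewrite /eta expR_trans_eff ?lt0r_neq0 //.
have dpi_eq : dpi = 1 - (1 - (1 - d) * cont_prob t t_ave) / (1 - c / Gamma d).
  rewrite /dpi hp coop_margin_at_price //;
    by rewrite ?(gt_eqF ht, lt_eqF hd1, gt_eqF Gd_gt0, gt_eqF hGd, lt_eqF htau1).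
have zeta'_eq : 1 - zeta = d / (1 - (1 - d) * cont_prob t t_ave).
  exact: one_sub_service_integrity.
split => //; last by rewrite -zeta'_eq subKr.
by rewrite dpi_eq zeta'_eq invfM invf_div mulrA [d * _]mulrC divfK ?lt0r_neq0.
Qed.
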